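(* Let $A$ and $A+\sum_{i=1}^r\mathbf{x}_i\mathbf{x}_i^{\top}$ both lie in $\mathrm{SGL}_n(\mathbb{F}_2)$, where $\mathbf{x}_1,\ldots,\mathbf{x}_r\in\mathbb{F}_2^n$ are linearly independent and $\mathbf{x}_i^{\top}A^{-1}\mathbf{x}_i=1$ for all $i$. Then $d\big(A,A+\sum_{i=1}^r\mathbf{x}_i\mathbf{x}_i^{\top}\big)\ge r+1$.
   Context: $\mathrm{SGL}_n(\mathbb{F}_2)$ is the set of invertible symmetric $n\times n$ matrices over the binary field; $d$ is the graph distance in the graph $\Gamma_n$ on $\mathrm{SGL}_n(\mathbb{F}_2)$ where $A\sim B$ iff $\mathrm{rank}(A-B)=1$. *)

From mathcomp Require Import all_boot all_order all_algebra.
Set Implicit Arguments. Unset Strict Implicit. Unset Printing Implicit Defensive.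
Import GRing.Theory.
Local Open Scope ring_scope.

Definition SGL (n : nat) (A : 'M['F_2]_n) : bool :=
  (A^T == A) && (A \in unitmx).

Definition Gamma_adj (n : nat) : rel 'M['F_2]_n :=
  fun A B => [&& SGL A, SGL B & \rank (A - B) == 1%N].

(* d(A,B) >= k in Gamma_n: every walk A = A_0 ~ A_1 ~ ... ~ A_m = B in Gamma_n
   has length m >= k (with d = +infinity when no walk exists). A walk is the
   sequence s = [A_1; ...; A_m] with path Gamma_adj A s and last A s = B. *)
Definition dist_geq (n : nat) (A B : 'M['F_2]_n) (k : nat) : Prop :=
  forall s : seq 'M['F_2]_n, path (@Gamma_adj n) A s -> last A s = B -> (k <= size s)%N.

From mathcomp Require Import all_boot all_order all_algebra.
(* A walk of length at most r from A to B = A + X^T X begins with a rank-one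
   step A + y^T y, after which a matrix of rank < r = rank (X^T X) remains to
   be covered; this forces y into the row space of X, as y = g X with
   g g^T = 1.  In characteristic 2 the quadratic form of a symmetric matrix
   only sees its diagonal, so y A^-1 y^T = g g^T = 1, and then
   (A + y^T y) A^-1 y^T = 0: the first step already leaves SGL. *)

Set Implicit Arguments.
Unset Strict Implicit.
Unset Printing Implicit Defensive.

Import GRing.Theory.
Local Open Scope ring_scope.

Lemma trmx11 (R : Type) (a : 'M[R]_1) : a^T = a.
Proof. by apply/matrixP => i j; rewrite !ord1 mxE. Qed.

Lemma sym_zero_diag_addtr (V : nmodType) n (N : 'M[V]_n) :
  N^T = N -> (forall i, N i i = 0) -> exists L : 'M_n, N = L + L^T.
Proof.
move=> symN diagN; exists (\matrix_(i, j) if (i < j)%N then N i j else 0).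
apply/matrixP => i j; rewrite !mxE.
case: (ltngtP i j) => [_ | _ | /val_inj ->]; rewrite ?addr0 ?add0r ?diagN //.
by rewrite -{1}symN mxE.
Qed.

Section Char2.

Variable R : comNzRingType.
Hypothesis pchar2R : 2 \in [pchar R].

Lemma addmx_pchar2 m n (M : 'M[R]_(m, n)) : M + M = 0.
Proof. by apply/matrixP => i j; rewrite !mxE addrr_pchar2. Qed.

Lemma quad_form_addtr_pchar2 n (L : 'M[R]_n) (v : 'rV_n) :
  v *m (L + L^T) *m v^T = 0.
Proof.
have trL : v *m L^T *m v^T = v *m L *m v^T.
  by rewrite -[RHS]trmx11 !trmx_mul trmxK mulmxA.
by rewrite mulmxDr mulmxDl trL addmx_pchar2.
Qed.

Lemma quad_form_sym_diag1 n (N : 'M[R]_n) (v : 'rV_n) :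
  N^T = N -> (forall i, N i i = 1) -> v *m N *m v^T = v *m v^T.
Proof.
move=> symN diagN; have -> : v *m v^T = v *m 1%:M *m v^T by rewrite mulmx1.
apply/eqP; rewrite -subr_eq0 -mulmxBl -mulmxBr.
have symN1 : (N - 1%:M)^T = N - 1%:M by rewrite linearB /= symN trmx1.
have diagN1 i : (N - 1%:M) i i = 0 by rewrite !mxE diagN eqxx subrr.
by have [L ->] := sym_zero_diag_addtr symN1 diagN1; rewrite quad_form_addtr_pchar2.
Qed.

Lemma quad_form_rowspace r n (X : 'M[R]_(r, n)) (S : 'M_n) (g : 'rV_r) :
  S^T = S -> (forall i, row i X *m S *m (row i X)^T = 1%:M) ->
  g *m X *m S *m (g *m X)^T = g *m g^T.
Proof.
move=> symS rowsX.
have -> : g *m X *m S *m (g *m X)^T = g *m (X *m S *m X^T) *m g^T.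
  by rewrite trmx_mul !mulmxA.
apply: quad_form_sym_diag1; first by rewrite !trmx_mul trmxK symS mulmxA.
move=> i; have -> : (X *m S *m X^T) i i = col i (row i (X *m S *m X^T)) 0 0.
  by rewrite !mxE.
by rewrite !row_mul colE -mulmxA -colE -tr_row rowsX mxE.
Qed.

End Char2.

Lemma add_rank1_notin_unitmx (R : comUnitRingType) n (A : 'M[R]_n) (y : 'rV_n) :
  2 \in [pchar R] -> A \in unitmx -> y *m invmx A *m y^T = 1%:M -> A + y^T *m y \notin unitmx.
Proof.
move=> pchar2R unitA qy; apply/negP => unitAy.
set w := invmx A *m y^T.
have kerw : (A + y^T *m y) *m w = 0.
  by rewrite mulmxDl mulmxA mulmxV // mul1mx -!mulmxA (mulmxA y) qy mulmx1 addmx_pchar2.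
have w0 : w = 0 by rewrite -(mulKmx unitAy w) kerw mulmx0.
move: qy; rewrite -mulmxA -/w w0 mulmx0 => /matrixP/(_ 0 0)/eqP.
by rewrite !mxE eqxx eq_sym oner_eq0.
Qed.

Section SymmetricRowspace.

Variable F : fieldType.

Lemma sym_separating_vector n (E : 'M[F]_n) (y : 'rV_n) :
  E^T = E -> ~~ (y <= E)%MS -> exists2 u : 'rV_n, u *m E = 0 & u *m y^T = 1%:M.
Proof.
rewrite submxE => symE /matrix0Pn[i [j]]; rewrite ord1 => yj.
set v := col j (cokermx E); set c := (y *m cokermx E) 0 j.
have Ev : E *m v = 0 by rewrite /v colE mulmxA mulmx_coker mul0mx.
have yv : y *m v = c%:M.
  by rewrite [LHS]mx11_scalar /v colE mulmxA -colE; congr _%:M; apply: mxE.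
exists (c^-1 *: v^T).
  by rewrite -scalemxAl -symE -trmx_mul Ev linear0 scaler0.
by rewrite -scalemxAl -trmx_mul yv tr_scalar_mx scale_scalar_mx mulVf.
Qed.

Lemma gram_split_rank1 r n (X : 'M[F]_(r, n)) (y : 'rV_n) (E : 'M_n) :
  row_free X -> E^T = E -> (\rank E < r)%N -> X^T *m X = y^T *m y + E ->
  exists2 g : 'rV_r, y = g *m X & g *m g^T = 1%:M.
Proof.
move=> freeX symE rankE gramX.
have y_notin_E : ~~ (y <= E)%MS.
  apply: contraTN rankE => yE; rewrite -leqNgt.
  have : (X^T *m X <= E)%MS by rewrite gramX addmx_sub // (submx_trans (submxMl _ _)).
  by move/mxrankS; rewrite mxrankMfree // mxrank_tr (eqP freeX).
have [u uE uy] := sym_separating_vector symE y_notin_E.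
have uX : u *m X^T *m X = y by rewrite -mulmxA gramX mulmxDr uE addr0 mulmxA uy mul1mx.
exists (u *m X^T) => //.
by rewrite trmx_mul trmxK mulmxA uX -[LHS]trmxK trmx_mul trmxK uy tr_scalar_mx.
Qed.

End SymmetricRowspace.

Lemma F2_neq0 (a : 'F_2) : a != 0 -> a = 1.
Proof. by case: a => [[|[|k]] //= lt_k2] _; apply/val_inj. Qed.

Lemma sym_rank1_F2 n (M : 'M['F_2]_n) :
  M^T = M -> \rank M = 1%N -> exists y : 'rV_n, M = y^T *m y.
Proof.
move=> symM rankM.
have [C [Rw eM]] : exists (C : 'cV_n) (Rw : 'rV_n), M = C *m Rw.
  by have := mulmx_base M; move: (col_base M) (row_base M); rewrite rankM => C Rw; exists C, Rw.
have entryM k l : M k l = C k 0 * Rw 0 l by rewrite eM mxE big_ord1.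
have [i Mii] : exists i, M i i = 1.
  have /matrix0Pn[i [j Mij]] : M != 0 by rewrite -mxrank_eq0 rankM.
  have Mji : M j i != 0 by rewrite -symM mxE.
  move: Mij Mji; rewrite !entryM !mulf_eq0 !negb_or => /andP[Ci _] /andP[_ Ri].
  by exists i; apply: F2_neq0; rewrite entryM mulf_neq0.
exists (row i M); apply/matrixP => k l; rewrite !mxE big_ord1 !mxE.
have -> : M i k = M k i by rewrite -{1}symM mxE.
by rewrite -[LHS]mulr1 -Mii !entryM mulrACA [RHS]mulrACA [Rw 0 l * _]mulrC.
Qed.

Lemma Gamma_adj_rank1_update n (A B : 'M['F_2]_n) :
  Gamma_adj A B -> exists y : 'rV_n, B = A + y^T *m y.
Proof.
case/and3P=> /andP[/eqP symA _] /andP[/eqP symB _] /eqP rankAB.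
have symBA : (B - A)^T = B - A by rewrite linearB /= symA symB.
have rankBA : \rank (B - A) = 1%N by rewrite -mxrank_opp opprB.
by have [y eBA] := sym_rank1_F2 symBA rankBA; exists y; rewrite -eBA addrC subrK.
Qed.

Lemma Gamma_path_rank n (A : 'M['F_2]_n) (s : seq 'M_n) :
  path (@Gamma_adj n) A s -> (\rank (last A s - A)%R <= size s)%N.
Proof.
elim: s A => [|B s IHs] A /=; first by rewrite subrr mxrank0.
case/andP=> /and3P[_ _ /eqP rankAB] /IHs rank_s.
have -> : last B s - A = (last B s - B) + (B - A) by rewrite addrA subrK.
apply: leq_trans (mxrank_add _ _) _.
by rewrite -(mxrank_opp (B - A)) opprB rankAB addn1.
Qed.

Lemma sum_outer_cV_trmx (R : pzSemiRingType) r n (x : 'I_r -> 'cV[R]_n) :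
  \sum_(i < r) x i *m (x i)^T = (\matrix_(i < r) (x i)^T)^T *m \matrix_(i < r) (x i)^T.
Proof.
apply/matrixP => a b; rewrite summxE !mxE; apply: eq_bigr => i _.
by rewrite !mxE big_ord1 !mxE.
Qed.

Theorem lemma4p6 (n r : nat) (A : 'M['F_2]_n) (x : 'I_r -> 'cV['F_2]_n) :
  (0 < r)%N ->
  SGL A ->
  SGL (A + \sum_(i < r) x i *m (x i)^T) ->
  row_free (\matrix_(i < r) (x i)^T) ->
  (forall i : 'I_r, (x i)^T *m invmx A *m x i = 1%:M) ->
  dist_geq A (A + \sum_(i < r) x i *m (x i)^T) r.+1.
Proof.
move=> r_gt0 /andP[/eqP symA unitA] /andP[/eqP symB _] freeX quadx s walk lastB.
rewrite ltnNge; apply/negP => short.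
rewrite sum_outer_cV_trmx in symB lastB.
set X := \matrix_(i < r) (x i)^T in freeX symB lastB.
case: s walk lastB short => [_ /= /esym/eqP | a s /= /andP[step walk] lastB].
  rewrite -subr_eq0 addrC addKr => /eqP gram0 _.
  by move: r_gt0; rewrite -(eqP freeX) -mxrank_tr -(mxrankMfree _ freeX) gram0 mxrank0.
move=> short.
have [_ /andP[/eqP sym_a unit_a] _] := and3P step.
have [y ea] := Gamma_adj_rank1_update step.
set E := A + X^T *m X - a.
have rankE : (\rank E < r)%N by rewrite /E -lastB (leq_ltn_trans (Gamma_path_rank walk)).
have symE : E^T = E by rewrite linearB /= symB sym_a.
have gramX : X^T *m X = y^T *m y + E by rewrite /E ea addrC opprD addrA subrK addrC addKr.
have [g yg gg] := gram_split_rank1 freeX symE rankE gramX.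
have rowsX i : row i X *m invmx A *m (row i X)^T = 1%:M by rewrite rowK trmxK quadx.
have quady : y *m invmx A *m y^T = 1%:M.
  by rewrite yg quad_form_rowspace ?pchar_Fp // trmx_inv symA.
by move: unit_a; rewrite ea; apply/negP/add_rank1_notin_unitmx; rewrite ?pchar_Fp.
Qed.
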